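(* Let $\beta_\bullet\in\{\beta,\beta_v\}$ and let $N$ be $\to_{\beta_\bullet}$-normal. For every term $M$: $M\to_{\beta_\bullet}^*N$ if and only if $M\rightsquigarrow_{pd}^*N$.
   Context: Terms $\Lambda_{\mathcal O}$: $M::=x\mid\lambda x.M\mid MM\mid\mathsf{op}(M,\dots,M)$ with $\mathsf{op}$ in a (possibly empty) set $\mathcal O$ of operator symbols with fixed arities; values $V::=x\mid\lambda x.M$. Rules $(\lambda x.M)N\mapsto_\beta M\{N/x\}$, $(\lambda x.M)V\mapsto_{\beta_v}M\{V/x\}$; $\to=\to_{\beta_\bullet}$ is the closure under all contexts (including under $\lambda$ and operators). Surface reduction $\to_s$: for $\beta$, closure of $\beta$ under head contexts $H::=[\,]\mid\lambda x.H\mid HM$; for $\beta_v$, closure of $\beta_v$ under weak contexts $W::=[\,]\mid WM\mid MW$. Parallel reduction $\rightsquigarrow_{pd}$: (1) if $M\to_sM'$ then $M\rightsquigarrow_{pd}M'$; (2) if $M$ is $\to$-normal then $M\rightsquigarrow_{pd}M$; (3) otherwise (M is $\to_s$-normal but not $\to$-normal): $\lambda x.P\rightsquigarrow_{pd}\lambda x.P'$ if $P\rightsquigarrow_{pd}P'$; $P_1P_2\rightsquigarrow_{pd}P_1'P_2'$ if $P_1\rightsquigarrow_{pd}P_1'$ and $P_2\rightsquigarrow_{pd}P_2'$; $\mathsf{op}(P_1,\dots,P_k)\rightsquigarrow_{pd}\mathsf{op}(P_1',\dots,P_k')$ if $P_i\rightsquigarrow_{pd}P_i'$ for all $i$. 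*)

From Stdlib Require Import List Arith Relations.
Import ListNotations.
Set Implicit Arguments.

Section Terms.
Variable O : Type.

Inductive term : Type :=
| Var : nat -> term
| Lam : term -> term
| App : term -> term -> term
| Op  : O -> list term -> term.

Fixpoint wf (ar : O -> nat) (t : term) : Prop :=
  match t with
  | Var _ => True
  | Lam u => wf ar u
  | App u v => wf ar u /\ wf ar v
  | Op o ts => length ts = ar o /\
      (fix wfl (l : list term) : Prop :=
         match l with [] => True | u :: l' => wf ar u /\ wfl l' end) ts
  end.

Fixpoint lift (d k : nat) (t : term) : term :=
  match t with
  | Var n => if k <=? n then Var (n + d) else Var n
  | Lam u => Lam (lift d (S k) u)
  | App u v => App (lift d k u) (lift d k v)
  | Op o ts => Op o (map (lift d k) ts)
  end.

Fixpoint subst (k : nat) (N : term) (t : term) : term :=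
  match t with
  | Var n => if n =? k then lift k 0 N
             else if k <? n then Var (pred n) else Var n
  | Lam u => Lam (subst (S k) N u)
  | App u v => App (subst k N u) (subst k N v)
  | Op o ts => Op o (map (subst k N) ts)
  end.

Definition is_value (t : term) : Prop :=
  match t with Var _ | Lam _ => True | _ => False end.

End Terms.

Arguments Var {O} _.

Inductive calculus := CBN | CBV.

Inductive root {O} : calculus -> term O -> term O -> Prop :=
| root_beta : forall M N, root CBN (App (Lam M) N) (subst 0 N M)
| root_betav : forall M V, is_value V -> root CBV (App (Lam M) V) (subst 0 V M).

Inductive one_step {A} (R : A -> A -> Prop) : list A -> list A -> Prop :=
| one_hd : forall x y l, R x y -> one_step R (x :: l) (y :: l)
| one_tl : forall x l l', one_step R l l' -> one_step R (x :: l) (x :: l').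

Inductive step {O} (c : calculus) : term O -> term O -> Prop :=
| step_root : forall M N, root c M N -> step c M N
| step_lam : forall M M', step c M M' -> step c (Lam M) (Lam M')
| step_appl : forall M M' N, step c M M' -> step c (App M N) (App M' N)
| step_appr : forall M N N', step c N N' -> step c (App M N) (App M N')
| step_op : forall o ts ts', one_step (step c) ts ts' -> step c (Op o ts) (Op o ts').

(* surface reduction: head contexts H ::= [] | \x.H | H M for beta,
   weak contexts W ::= [] | W M | M W for beta_v *)
Inductive sstep {O} (c : calculus) : term O -> term O -> Prop :=
| sstep_root : forall M N, root c M N -> sstep c M N
| sstep_lam : forall M M', c = CBN -> sstep c M M' -> sstep c (Lam M) (Lam M')
| sstep_appl : forall M M' N, sstep c M M' -> sstep c (App M N) (App M' N)
| sstep_appr : forall M N N', c = CBV -> sstep c N N' -> sstep c (App M N) (App M N').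

Definition normal {O} (c : calculus) (M : term O) : Prop := forall M', ~ step c M M'.
Definition snormal {O} (c : calculus) (M : term O) : Prop := forall M', ~ sstep c M M'.

Inductive pd {O} (c : calculus) : term O -> term O -> Prop :=
| pd_surf : forall M M', sstep c M M' -> pd c M M'
| pd_norm : forall M, normal c M -> pd c M M
| pd_lam : forall P P', snormal c (Lam P) -> ~ normal c (Lam P) ->
    pd c P P' -> pd c (Lam P) (Lam P')
| pd_app : forall P1 P2 P1' P2', snormal c (App P1 P2) -> ~ normal c (App P1 P2) ->
    pd c P1 P1' -> pd c P2 P2' -> pd c (App P1 P2) (App P1' P2')
| pd_op : forall o Ps Ps', snormal c (Op o Ps) -> ~ normal c (Op o Ps) ->
    Forall2 (pd c) Ps Ps' -> pd c (Op o Ps) (Op o Ps').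

From Stdlib Require Import List Arith Relations Lia Classical.
Import ListNotations.
Set Implicit Arguments.

(* A parallel step is a finite sequence of ordinary steps, which gives one
   direction.  Conversely, by a Takahashi-style standardization, M ->* N
   factors through [standard]: M surface-reduces to a term with the outermost
   constructor of N, whose immediate subterms reduce in the same way to those
   of N.  Surface steps are parallel steps, so it remains to merge the
   reductions of the immediate subterms to their counterparts in N, which are
   normal, into parallel steps of the whole term.  If the whole term is
   surface-normal but not normal, rule (3) advances all immediate subterms at
   once, those already normal staying put by rule (2).  Otherwise its surface
   redex is not at the root, since a root redex would survive to the normal
   form N; so it lies in an immediate subterm that is not surface-normal,
   whose parallel step is then a surface step, and that lifts to the whole
   term. *)

Lemma clos_rt_map {A B : Type} (R : relation A) (S : relation B) (f : A -> B) :
  (forall x y, R x y -> clos_refl_trans B S (f x) (f y)) ->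
  forall x y, clos_refl_trans A R x y -> clos_refl_trans B S (f x) (f y).
Proof.
  intros Hf x y Hxy.
  induction Hxy; [apply Hf | apply rt_refl | eapply rt_trans]; eauto.
Qed.

Section Closures.
Context {A : Type} (R : relation A).

Lemma Forall2_clos_rt_one_step (xs ys : list A) :
  Forall2 (clos_refl_trans A R) xs ys -> clos_refl_trans _ (one_step R) xs ys.
Proof.
  induction 1 as [|x y xs ys Hxy _ IH]; [apply rt_refl|].
  apply rt_trans with (y :: xs).
  - eapply (clos_rt_map (fun z => z :: xs)); [intros; apply rt_step, one_hd |]; eassumption.
  - eapply (clos_rt_map (cons y)); [intros; apply rt_step, one_tl |]; eassumption.
Qed.

Inductive iter : nat -> relation A :=
| iter_0 x : iter 0 x x
| iter_S n x y z : R x y -> iter n y z -> iter (S n) x z.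

Lemma clos_rt_iter x y : clos_refl_trans A R x y -> exists n, iter n x y.
Proof.
  intros H; apply clos_rt_rt1n in H.
  induction H as [x|x y z Hxy _ [n Hn]]; [exists 0 | exists (S n)]; econstructor; eauto.
Qed.

Lemma iter_invariant (P : A -> Prop) n x y :
  (forall x y, R x y -> P x -> P y) -> iter n x y -> P x -> P y.
Proof. intros HP H; induction H; eauto. Qed.

Lemma iter_fixed_source n x y : (forall z, R x z -> z = x) -> iter n x y -> y = x.
Proof.
  intros Hx H; revert Hx; induction H as [|n x y z Hxy _ IH]; intros Hx; auto.
  rewrite (Hx y Hxy) in *; auto.
Qed.

Lemma iter_pad n m x y : R y y -> iter n x y -> n <= m -> iter m x y.
Proof.
  intros Hy H; revert m; induction H as [x|n x x' y Hx _ IH]; intros m Hm.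
  - clear Hm; induction m; econstructor; eassumption.
  - destruct m as [|m]; [lia|]. econstructor; [eassumption | apply IH; auto; lia].
Qed.

Lemma iter_advance n x y : R y y -> iter n x y -> exists x', R x x' /\ iter (pred n) x' y.
Proof. intros Hy H; destruct H; eauto using iter. Qed.

Lemma Forall2_iter_0 xs ys : Forall2 (iter 0) xs ys -> ys = xs.
Proof. induction 1 as [|x y xs ys Hxy _ IH]; [|inversion Hxy; subst]; congruence. Qed.

Lemma Forall2_iter_S k xs ys : Forall2 (iter (S k)) xs ys ->
  exists xs', Forall2 R xs xs' /\ Forall2 (iter k) xs' ys.
Proof.
  induction 1 as [|x y xs ys Hxy _ [xs' [H1 H2]]]; [exists []; auto|].
  inversion Hxy; subst. eexists (_ :: xs'); split; constructor; eassumption.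
Qed.

Lemma Forall2_iter_pad k m xs ys : Forall (fun y => R y y) ys ->
  Forall2 (iter k) xs ys -> k <= m -> Forall2 (iter m) xs ys.
Proof.
  intros Hys H Hkm; induction H; inversion Hys; subst; constructor; auto.
  eapply iter_pad; eassumption.
Qed.

Lemma Forall2_clos_rt_iter xs ys : Forall (fun y => R y y) ys ->
  Forall2 (clos_refl_trans A R) xs ys -> exists k, Forall2 (iter k) xs ys.
Proof.
  intros Hys H; induction H as [|x y xs ys Hxy _ IH]; [exists 0; constructor|].
  inversion Hys as [|? ? Hy Hys']; subst.
  destruct (IH Hys') as [k Hk], (clos_rt_iter Hxy) as [n Hn].
  exists (max n k); constructor.
  - eapply iter_pad; [eassumption | eassumption | lia].
  - eapply Forall2_iter_pad; [eassumption | eassumption | lia].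
Qed.

Lemma Forall2_clos_rt_cong {B : Type} (S : relation B) (F : list A -> B) xs ys :
  (forall xs xs', Forall2 R xs xs' -> clos_refl_trans B S (F xs) (F xs')) ->
  Forall (fun y => R y y) ys ->
  Forall2 (clos_refl_trans A R) xs ys -> clos_refl_trans B S (F xs) (F ys).
Proof.
  intros HF Hys Hxs; destruct (Forall2_clos_rt_iter Hys Hxs) as [k Hk]; clear Hxs.
  revert xs Hk; induction k as [|k IH]; intros xs Hk.
  - rewrite (Forall2_iter_0 Hk); apply rt_refl.
  - destruct (Forall2_iter_S Hk) as (xs' & Hxs' & Hk').
    eapply rt_trans; [apply HF, Hxs' | apply IH, Hk'].
Qed.

End Closures.

Section Lists.
Context {A B : Type}.

Lemma Forall2_map_Forall {A' B' : Type} (R : A -> B -> Prop) (S : A' -> B' -> Prop)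
  (f : A -> A') (g : B -> B') xs ys :
  Forall (fun y => forall x, R x y -> S (f x) (g y)) ys ->
  Forall2 R xs ys -> Forall2 S (map f xs) (map g ys).
Proof. intros Hys H; induction H; inversion Hys; subst; constructor; auto. Qed.

Lemma Forall2_one_step_r (R : A -> B -> Prop) (S : relation B) xs ys ys' :
  Forall (fun y => forall x y', R x y -> S y y' -> R x y') ys ->
  Forall2 R xs ys -> one_step S ys ys' -> Forall2 R xs ys'.
Proof.
  intros Hys Hxs Hs; revert xs Hxs; induction Hs; intros xs Hxs;
    inversion Hxs; inversion Hys; subst; constructor; eauto.
Qed.

End Lists.

Section Terms.
Context {O : Type}.
Notation tm := (term O).
Notation rt R := (clos_refl_trans tm R).

Definition term_nested_ind (Pt : tm -> Prop) (HV : forall n, Pt (Var n))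
  (HL : forall t, Pt t -> Pt (Lam t)) (HA : forall t u, Pt t -> Pt u -> Pt (App t u))
  (HO : forall o ts, Forall Pt ts -> Pt (Op o ts)) : forall t, Pt t :=
  fix F t := match t with
  | Var n => HV n
  | Lam u => HL u (F u)
  | App u v => HA u v (F u) (F v)
  | Op o ts => HO o ts ((fix G l := match l as l return Forall Pt l with
                 | [] => Forall_nil Pt
                 | x :: l' => Forall_cons x (F x) (G l') end) ts)
  end.

Ltac index_cases := repeat (cbn [lift subst]; match goal with
  | |- context [?a =? ?b] => destruct (Nat.eqb_spec a b)
  | |- context [?a <? ?b] => destruct (Nat.ltb_spec a b)
  | |- context [?a <=? ?b] => destruct (Nat.leb_spec a b)
  end); cbn [lift subst]; try (f_equal; lia); try lia.

Ltac op_case IH := cbn [lift subst]; f_equal; rewrite ?map_map; apply map_ext_in;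
  intros ? Hin; rewrite Forall_forall in IH; apply IH; auto; lia.

Lemma lift_lift_comm (W : tm) i k d j : i <= k ->
  lift d (k + j) (lift j i W) = lift j i (lift d k W).
Proof.
  revert i k; induction W as [n|W IH|W1 W2 IH1 IH2|o ts IH] using term_nested_ind;
    intros i k Hik.
  - index_cases.
  - cbn; f_equal; apply (IH (S i) (S k)); lia.
  - cbn; f_equal; auto.
  - op_case IH.
Qed.

Lemma lift_lift_add (W : tm) i j k l : l <= i <= l + k ->
  lift j i (lift k l W) = lift (j + k) l W.
Proof.
  revert i l; induction W as [n|W IH|W1 W2 IH1 IH2|o ts IH] using term_nested_ind;
    intros i l Hi.
  - index_cases.
  - cbn; f_equal; apply IH; lia.
  - cbn; f_equal; auto.
  - op_case IH.
Qed.

Lemma lift_subst_comm (A W : tm) d k j :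
  lift d (j + k) (subst j W A) = subst j (lift d k W) (lift d (S (j + k)) A).
Proof.
  revert j; induction A as [n|A IH|A1 A2 IH1 IH2|o ts IH] using term_nested_ind; intros j.
  - index_cases. subst. rewrite Nat.add_comm. apply lift_lift_comm. lia.
  - cbn; f_equal; apply (IH (S j)).
  - cbn; f_equal; auto.
  - op_case IH.
Qed.

Lemma subst_lift_vacuous (N X : tm) i j m : i <= j <= i + m ->
  subst j X (lift (S m) i N) = lift m i N.
Proof.
  revert i j; induction N as [n|N IH|N1 N2 IH1 IH2|o ts IH] using term_nested_ind;
    intros i j Hi.
  - index_cases.
  - cbn; f_equal; apply IH; lia.
  - cbn; f_equal; auto.
  - op_case IH.
Qed.

Lemma subst_lift_comm (W N : tm) i j k : i <= k ->
  subst (j + k) N (lift j i W) = lift j i (subst k N W).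
Proof.
  revert i k; induction W as [n|W IH|W1 W2 IH1 IH2|o ts IH] using term_nested_ind;
    intros i k Hik.
  - index_cases. subst. rewrite lift_lift_add by lia. reflexivity.
  - cbn; f_equal. replace (S (j + k)) with (j + S k) by lia. apply IH; lia.
  - cbn; f_equal; auto.
  - op_case IH.
Qed.

Lemma subst_subst_comm (A W N : tm) j k :
  subst (j + k) N (subst j W A) = subst j (subst k N W) (subst (S (j + k)) N A).
Proof.
  revert j; induction A as [n|A IH|A1 A2 IH1 IH2|o ts IH] using term_nested_ind; intros j.
  - index_cases.
    + subst. rewrite subst_lift_comm by lia. reflexivity.
    + replace (pred n) with (j + k) by lia. rewrite subst_lift_vacuous by lia. reflexivity.
  - cbn; f_equal; apply (IH (S j)).
  - cbn; f_equal; auto.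
  - op_case IH.
Qed.

Lemma is_value_lift (V : tm) d k : is_value V -> is_value (lift d k V).
Proof. destruct V; simpl; auto. destruct (k <=? n); simpl; auto. Qed.

Lemma is_value_subst (V N : tm) k : is_value V -> is_value N -> is_value (subst k N V).
Proof.
  destruct V as [n| | |]; simpl; auto. intros _ HN. destruct (n =? k).
  - apply is_value_lift; auto.
  - destruct (k <? n); simpl; auto.
Qed.

Lemma sstep_lift c (M M' : tm) d k : sstep c M M' -> sstep c (lift d k M) (lift d k M').
Proof.
  intros H; revert k; induction H as [M N Hr| | |]; intros k; cbn.
  - destruct Hr; rewrite (lift_subst_comm _ _ d k 0); constructor; constructor.
    apply is_value_lift; auto.
  - apply sstep_lam; auto.
  - apply sstep_appl; auto.
  - apply sstep_appr; auto.
Qed.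

Lemma sstep_subst c (M M' N : tm) k : (c = CBV -> is_value N) ->
  sstep c M M' -> sstep c (subst k N M) (subst k N M').
Proof.
  intros HN H; revert k; induction H as [M N' Hr| | |]; intros k; cbn.
  - destruct Hr; rewrite (subst_subst_comm _ _ _ 0 k); constructor; constructor.
    apply is_value_subst; auto.
  - apply sstep_lam; auto.
  - apply sstep_appl; auto.
  - apply sstep_appr; auto.
Qed.

Lemma clos_rt_sstep_lift c (M M' : tm) d k :
  rt (sstep c) M M' -> rt (sstep c) (lift d k M) (lift d k M').
Proof. apply clos_rt_map; intros; apply rt_step, sstep_lift; assumption. Qed.

Lemma clos_rt_sstep_subst c (M M' N : tm) k : (c = CBV -> is_value N) ->
  rt (sstep c) M M' -> rt (sstep c) (subst k N M) (subst k N M').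
Proof. intros HN; apply clos_rt_map; intros; apply rt_step, sstep_subst; assumption. Qed.

Lemma clos_rt_sstep_appl c (P P' Q : tm) :
  rt (sstep c) P P' -> rt (sstep c) (App P Q) (App P' Q).
Proof.
  apply (clos_rt_map (fun X => App X Q)); intros; apply rt_step, sstep_appl; assumption.
Qed.

Lemma clos_rt_sstep_appr (P Q Q' : tm) :
  rt (sstep CBV) Q Q' -> rt (sstep CBV) (App P Q) (App P Q').
Proof. apply clos_rt_map; intros; apply rt_step, sstep_appr; auto. Qed.

(* Takahashi's inductive characterisation of standard reductions. *)
Inductive standard c : tm -> tm -> Prop :=
| standard_var M n : rt (sstep c) M (Var n) -> standard c M (Var n)
| standard_lam M P P' : rt (sstep c) M (Lam P) -> standard c P P' -> standard c M (Lam P')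
| standard_app M P Q P' Q' : rt (sstep c) M (App P Q) ->
    standard c P P' -> standard c Q Q' -> standard c M (App P' Q')
| standard_op M o Ps Ps' : rt (sstep c) M (Op o Ps) ->
    Forall2 (standard c) Ps Ps' -> standard c M (Op o Ps').

Lemma standard_prefix c (M X Y : tm) : rt (sstep c) M X -> standard c X Y -> standard c M Y.
Proof.
  intros HMX HXY; destruct HXY;
    econstructor; try (eapply rt_trans; [exact HMX | eassumption]); eassumption.
Qed.

Lemma standard_refl c (M : tm) : standard c M M.
Proof.
  induction M as [n|M IH|M1 M2 IH1 IH2|o Ms IH] using term_nested_ind;
    econstructor; try apply rt_refl; try eassumption.
  induction IH; constructor; assumption.
Qed.

Lemma standard_lift c (M N : tm) d k : standard c M N -> standard c (lift d k M) (lift d k N).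
Proof.
  revert M k; induction N as [n|N IH|N1 N2 IH1 IH2|o Ns IH] using term_nested_ind;
    intros M k H; inversion H as [? ? HM|? P ? HM HP|? P Q ? ? HM HP HQ|? ? Ps ? HM HPs];
    subst; eapply standard_prefix; try exact (clos_rt_sstep_lift d k HM); cbn.
  - apply standard_refl.
  - eapply standard_lam; [apply rt_refl | auto].
  - eapply standard_app; [apply rt_refl | auto | auto].
  - eapply standard_op; [apply rt_refl |].
    eapply Forall2_map_Forall; [|exact HPs].
    eapply Forall_impl; [|exact IH]; auto.
Qed.

Lemma standard_subst c (M M' N N' : tm) k : (c = CBV -> is_value N) ->
  standard c N N' -> standard c M M' -> standard c (subst k N M) (subst k N' M').
Proof.
  intros HvN HN; revert M k;
    induction M' as [n|M' IH|M1 M2 IH1 IH2|o Ms IH] using term_nested_ind;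
    intros M k H; inversion H as [? ? HM|? P ? HM HP|? P Q ? ? HM HP HQ|? ? Ps ? HM HPs];
    subst; eapply standard_prefix; try exact (clos_rt_sstep_subst N k HvN HM); cbn.
  - destruct (n =? k); [apply standard_lift, HN | apply standard_refl].
  - eapply standard_lam; [apply rt_refl | auto].
  - eapply standard_app; [apply rt_refl | auto | auto].
  - eapply standard_op; [apply rt_refl |].
    eapply Forall2_map_Forall; [|exact HPs].
    eapply Forall_impl; [|exact IH]; auto.
Qed.

Lemma standard_value c (Q Q' : tm) : standard c Q Q' -> is_value Q' ->
  exists Q0, rt (sstep c) Q Q0 /\ is_value Q0 /\ standard c Q0 Q'.
Proof.
  intros H HV; destruct H; cbn in HV; try contradiction.
  - exists (Var n); repeat split; auto. apply standard_refl.
  - exists (Lam P); repeat split; auto. eapply standard_lam; [apply rt_refl | auto].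
Qed.

(* The root case is where standardization happens: the redex contracted in
   [N] is traced back to a surface redex reachable from [M] (for beta_v, after
   surface-reducing its argument to a value). *)
Lemma standard_step_r c (M N N' : tm) : standard c M N -> step c N N' -> standard c M N'.
Proof.
  revert M N'; induction N as [n|N IH|N1 N2 IH1 IH2|o Ns IH] using term_nested_ind;
    intros M N' H HN; inversion H as [? ? HM|? P ? HM HP|? P Q ? ? HM HP HQ|? ? Ps ? HM HPs];
    subst; inversion HN as [? ? Hr| | | |]; subst; try (inversion Hr; fail).
  - eapply standard_lam; eauto.
  - inversion Hr as [A N2'|A N2' HvN2]; subst;
      inversion HP as [|? A0 ? HP0 HA| |]; subst.
    + eapply standard_prefix; [| apply standard_subst; [discriminate | exact HQ | exact HA]].
      eapply rt_trans; [exact HM|]; eapply rt_trans; [exact (clos_rt_sstep_appl Q HP0)|].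
      apply rt_step, sstep_root, root_beta.
    + destruct (standard_value HQ HvN2) as (Q0 & HQ0 & HvQ0 & HQ0N2).
      eapply standard_prefix;
        [| apply standard_subst; [intros _; exact HvQ0 | exact HQ0N2 | exact HA]].
      eapply rt_trans; [exact HM|]; eapply rt_trans; [exact (clos_rt_sstep_appl Q HP0)|].
      eapply rt_trans; [exact (clos_rt_sstep_appr (Lam A0) HQ0)|].
      apply rt_step, sstep_root, root_betav, HvQ0.
  - eapply standard_app; eauto.
  - eapply standard_app; eauto.
  - eapply standard_op; [exact HM|].
    eapply Forall2_one_step_r; [| exact HPs | eassumption].
    eapply Forall_impl; [|exact IH]; eauto.
Qed.

Lemma clos_rt_step_standard c (M N : tm) : rt (step c) M N -> standard c M N.
Proof.
  intros H; apply clos_rt_rtn1 in H.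
  induction H; [apply standard_refl | eapply standard_step_r; eassumption].
Qed.

Lemma sstep_step c (M M' : tm) : sstep c M M' -> step c M M'.
Proof.
  induction 1; [apply step_root | apply step_lam | apply step_appl | apply step_appr]; auto.
Qed.

Lemma normal_snormal c (M : tm) : normal c M -> snormal c M.
Proof. intros H X HX; apply (H X), sstep_step, HX. Qed.

Lemma sstep_not_snormal c (M M' : tm) : sstep c M M' -> ~ snormal c M.
Proof. intros H HM; exact (HM _ H). Qed.

Lemma not_snormal_sstep c (M : tm) : ~ snormal c M -> exists M', sstep c M M'.
Proof. intros H; apply NNPP; intros Hno; apply H; intros X HX; eauto. Qed.

Lemma snormal_op c o (Ps : list tm) : snormal c (Op o Ps).
Proof. intros X HX; inversion HX as [? ? Hr| | |]; inversion Hr. Qed.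

Lemma normal_lam c (P : tm) : normal c (Lam P) -> normal c P.
Proof. intros H X HX; apply (H (Lam X)), step_lam, HX. Qed.

Lemma normal_app c (P Q : tm) : normal c (App P Q) -> normal c P /\ normal c Q.
Proof.
  intros H; split; intros X HX;
    [apply (H (App X Q)), step_appl | apply (H (App P X)), step_appr]; exact HX.
Qed.

Lemma normal_op c o (Ps : list tm) : normal c (Op o Ps) -> Forall (normal c) Ps.
Proof.
  intros H; apply Forall_forall; intros P HP X HX.
  destruct (in_split _ _ HP) as (Ps1 & Ps2 & ->).
  apply (H (Op o (Ps1 ++ X :: Ps2))), step_op.
  clear H HP; induction Ps1; cbn; constructor; assumption.
Qed.

Lemma pd_normal c (M M' : tm) : normal c M -> pd c M M' -> M' = M.
Proof.
  intros HM H; destruct H; try contradiction; auto.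
  exfalso; eapply HM, sstep_step; eassumption.
Qed.

Lemma pd_not_snormal c (M M' : tm) : ~ snormal c M -> pd c M M' -> sstep c M M'.
Proof.
  intros HM H; destruct H; try contradiction; auto.
  exfalso; apply HM, normal_snormal; assumption.
Qed.

Lemma pd_abs c (A M : tm) : pd c (Lam A) M -> exists B, M = Lam B.
Proof.
  intros H; inversion H as [? ? Hs| | | |]; subst; eauto.
  inversion Hs as [? ? Hr| | |]; subst; [inversion Hr | eauto].
Qed.

Lemma pd_value c (V M : tm) : is_value V -> pd c V M -> is_value M.
Proof.
  intros HV H; destruct V as [n|A| |]; cbn in HV; try contradiction.
  - assert (Hn : normal c (Var n : tm))
      by (intros X HX; inversion HX as [? ? Hr| | | |]; inversion Hr).
    rewrite (pd_normal Hn H); exact I.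
  - destruct (pd_abs H) as [B ->]; exact I.
Qed.

Lemma pd_iter_normal_source c n (M N : tm) : normal c M -> iter (pd c) n M N -> N = M.
Proof. intros HM; apply iter_fixed_source; intros; eapply pd_normal; eassumption. Qed.

Lemma pd_iter_not_snormal c n (P N : tm) : normal c N -> ~ snormal c P ->
  iter (pd c) n P N -> exists n' P', n = S n' /\ sstep c P P' /\ iter (pd c) n' P' N.
Proof.
  intros HN HP H; inversion H as [|n' ? P' ? HPP' HP'N]; subst.
  - exfalso; apply HP, normal_snormal, HN.
  - exists n', P'; repeat split; auto. apply pd_not_snormal; assumption.
Qed.

Lemma pd_iter_root_redex c a b (P Q N1 N2 X : tm) : root c (App P Q) X ->
  iter (pd c) a P N1 -> iter (pd c) b Q N2 -> ~ normal c (App N1 N2).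
Proof.
  intros Hr HP HQ HN.
  assert (Habs : forall A, iter (pd c) a (Lam A) N1 -> exists B, N1 = Lam B).
  { intros A H; eapply (iter_invariant (fun t => exists B, t = Lam B)); [| exact H | eauto].
    intros x y Hxy [B ->]; eapply pd_abs, Hxy. }
  inversion Hr as [A ?|A ? HvQ]; subst; destruct (Habs A HP) as [B ->].
  - apply (HN (subst 0 N2 B)), step_root, root_beta.
  - apply (HN (subst 0 N2 B)), step_root, root_betav.
    eapply (iter_invariant (@is_value O)); [| exact HQ | exact HvQ].
    intros x y Hxy Hx; eapply pd_value; eassumption.
Qed.

Lemma pd_lam_cong c (P P' : tm) : pd c P P' -> rt (pd c) (Lam P) (Lam P').
Proof.
  intros H.
  destruct (classic (normal c (Lam P))) as [HnP|HnP].
  { rewrite (pd_normal (normal_lam HnP) H); apply rt_refl. }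
  destruct (classic (snormal c (Lam P))) as [HsP|HsP].
  { apply rt_step, pd_lam; assumption. }
  destruct (not_snormal_sstep HsP) as [X HX].
  inversion HX as [? ? Hr|? P'' HcN HPP''| |]; subst; [inversion Hr|].
  apply rt_step, pd_surf, sstep_lam; [reflexivity|].
  apply pd_not_snormal; [eapply sstep_not_snormal; eassumption | exact H].
Qed.

Lemma pd_op_cong c o (Ps Ps' : list tm) :
  Forall2 (pd c) Ps Ps' -> rt (pd c) (Op o Ps) (Op o Ps').
Proof.
  intros H.
  destruct (classic (normal c (Op o Ps))) as [HnPs|HnPs].
  - replace Ps' with Ps; [apply rt_refl|].
    apply normal_op in HnPs.
    induction H; inversion HnPs; subst; f_equal; auto.
    symmetry; eapply pd_normal; eassumption.
  - apply rt_step, pd_op; auto using snormal_op.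
Qed.

Lemma pd_star_lam c (P N : tm) : rt (pd c) P N -> rt (pd c) (Lam P) (Lam N).
Proof. apply clos_rt_map, pd_lam_cong. Qed.

Lemma pd_star_op c o (Ps Ns : list tm) : Forall (normal c) Ns ->
  Forall2 (rt (pd c)) Ps Ns -> rt (pd c) (Op o Ps) (Op o Ns).
Proof.
  intros HNs; apply Forall2_clos_rt_cong; [apply pd_op_cong|].
  eapply Forall_impl; [|exact HNs]; apply pd_norm.
Qed.

(* Induction on the total length of the two reductions: a surface step
   advances one side, a parallel step of the application both. *)
Lemma pd_star_app c (P Q N1 N2 : tm) : normal c (App N1 N2) ->
  rt (pd c) P N1 -> rt (pd c) Q N2 -> rt (pd c) (App P Q) (App N1 N2).
Proof.
  intros HN HP HQ; destruct (normal_app HN) as [HN1 HN2].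
  destruct (clos_rt_iter HP) as [a Ha], (clos_rt_iter HQ) as [b Hb]; clear HP HQ.
  remember (a + b) as s eqn:Hs; revert P Q a b Ha Hb Hs.
  induction s as [s IH] using lt_wf_ind; intros P Q a b Ha Hb ->.
  destruct (classic (normal c (App P Q))) as [HnPQ|HnPQ].
  { destruct (normal_app HnPQ) as [HnP HnQ].
    rewrite (pd_iter_normal_source HnP Ha), (pd_iter_normal_source HnQ Hb).
    apply rt_refl. }
  destruct (classic (snormal c (App P Q))) as [HsPQ|HsPQ].
  - destruct (iter_advance (pd_norm HN1) Ha) as (P' & HPP' & HP'N1).
    destruct (iter_advance (pd_norm HN2) Hb) as (Q' & HQQ' & HQ'N2).
    assert (Hab : a + b <> 0).
    { intros Hab; assert (a = 0) as -> by lia; assert (b = 0) as -> by lia.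
      inversion Ha; inversion Hb; subst; contradiction. }
    eapply rt_trans; [apply rt_step, pd_app; eassumption|].
    apply (IH (pred a + pred b)) with (a := pred a) (b := pred b); auto; lia.
  - destruct (not_snormal_sstep HsPQ) as [X HX].
    inversion HX as [? ? Hr|? ? ? ?|? ? ? HPX|? ? ? ? HQX]; subst.
    + exfalso; eapply pd_iter_root_redex; eassumption.
    + destruct (pd_iter_not_snormal HN1 (sstep_not_snormal HPX) Ha)
        as (a' & P' & -> & HPP' & HP'N1).
      eapply rt_trans; [apply rt_step, pd_surf, sstep_appl, HPP'|].
      apply (IH (a' + b)) with (a := a') (b := b); auto; lia.
    + destruct (pd_iter_not_snormal HN2 (sstep_not_snormal HQX) Hb)
        as (b' & Q' & -> & HQQ' & HQ'N2).
      eapply rt_trans; [apply rt_step, pd_surf, sstep_appr, HQQ'; reflexivity|].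
      apply (IH (a + b')) with (a := a) (b := b'); auto; lia.
Qed.

Lemma clos_rt_sstep_pd c (M N : tm) : rt (sstep c) M N -> rt (pd c) M N.
Proof. apply (clos_rt_map id); intros; apply rt_step, pd_surf; assumption. Qed.

Lemma standard_normal_pd_star c (M N : tm) : normal c N -> standard c M N -> rt (pd c) M N.
Proof.
  revert M; induction N as [n|N IH|N1 N2 IH1 IH2|o Ns IH] using term_nested_ind;
    intros M HN H; inversion H as [? ? HM|? P ? HM HP|? P Q ? ? HM HP HQ|? ? Ps ? HM HPs];
    subst; (eapply rt_trans; [exact (clos_rt_sstep_pd HM)|]).
  - apply rt_refl.
  - apply pd_star_lam, IH; [apply normal_lam|]; assumption.
  - destruct (normal_app HN) as [HN1 HN2].
    apply pd_star_app; auto.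
  - pose proof (normal_op HN) as HNs.
    apply pd_star_op; [exact HNs|].
    clear H HM HN; induction HPs; inversion IH; inversion HNs; subst; constructor; auto.
Qed.

Lemma pd_clos_rt_step c (M M' : tm) : pd c M M' -> rt (step c) M M'.
Proof.
  revert M'; induction M as [n|M IH|M1 M2 IH1 IH2|o Ms IH] using term_nested_ind;
    intros M' H;
    inversion H as [? ? Hs|? ?|? P' ? ? HP|? ? P1' P2' ? ? HP1 HP2|? ? Ps' ? ? HPs];
    subst; try (apply rt_step, sstep_step, Hs); try apply rt_refl.
  - apply (clos_rt_map (R := step c) (@Lam O)); [intros; apply rt_step, step_lam|]; auto.
  - apply rt_trans with (App P1' M2).
    + apply (clos_rt_map (R := step c) (fun X => App X M2));
        [intros; apply rt_step, step_appl|]; auto.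
    + apply (clos_rt_map (R := step c) (App P1')); [intros; apply rt_step, step_appr|]; auto.
  - apply (clos_rt_map (R := one_step (step c)) (Op o));
      [intros; apply rt_step, step_op|]; auto.
    apply Forall2_clos_rt_one_step.
    clear - IH HPs; induction HPs; inversion IH; subst; constructor; auto.
Qed.

End Terms.

Theorem mainTheorem15 (O : Type) (ar : O -> nat) (c : calculus) (M N : term O) :
  wf ar M -> wf ar N -> normal c N ->
  (clos_refl_trans _ (step c) M N <-> clos_refl_trans _ (pd c) M N).
Proof.
  intros _ _ HN; split; intros H.
  - apply standard_normal_pd_star; [exact HN|].
    apply clos_rt_step_standard, H.
  - apply (clos_rt_map (R := pd c) id); [apply pd_clos_rt_step | exact H].
Qed.
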